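(* Let $p,q,p',q'$ be primes. In the algebra $(\mathbb N,\cdot,\mathbb N)$, $$p:q::_m p':q'\iff (p=q\text{ and }p'=q')\ \text{or}\ (p=p'\text{ and }q=q').$$
   Context: $(\mathbb N,\cdot,\mathbb N)$ is the algebra with universe the natural numbers $\mathbb N$, multiplication, and every natural number as a constant. A justification is a pair of terms $s\to t$ with the variables of $t$ among those of $s$; monolinear justifications are those where $s,t$ contain only one fixed variable $x$, occurring at most once in $s$ and at most once in $t$. $\uparrow^m(a\to b)$ is the set of monolinear justifications $s\to t$ with $a=s(\mathbf o)$, $b=t(\mathbf o)$ for some value $\mathbf o$; $\uparrow^m(a\to b:\!\cdot\,c\to d):=\uparrow^m(a\to b)\cap\uparrow^m(c\to d)$. A monolinear justification is trivial if it lies in all sets $\uparrow^m(a'\to b':\!\cdot\,c'\to d')$. $a\to b:\!\cdot_m\,c\to d$ holds iff either (i) all justifications in $\uparrow^m(a\to b)\cup\uparrow^m(c\to d)$ are trivial, or (ii) $J_d:=\uparrow^m(a\to b:\!\cdot\,c\to d)$ contains a non-trivial justification and for every $d'$, $J_d\subseteq J_{d'}$ implies $J_{d'}$ contains a non-trivial justification and $J_{d'}\subseteq J_d$ (ignoring trivial justifications). $a:b::_m c:d$ iff $a\to b:\!\cdot_m\,c\to d$, $b\to a:\!\cdot_m\,d\to c$, $c\to d:\!\cdot_m\,a\to b$, $d\to c:\!\cdot_m\,b\to a$ all hold. *)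

From mathcomp Require Import all_boot.
Set Implicit Arguments.
Unset Strict Implicit.
Unset Printing Implicit Defensive.

(* Terms of the algebra (N, *, N) in the single fixed variable x:
   the variable, a constant for every natural number, and products. *)
Inductive term : Type :=
  | Var : term
  | Cst : nat -> term
  | Mul : term -> term -> term.

Fixpoint eval (o : nat) (t : term) : nat :=
  match t with
  | Var => o
  | Cst n => n
  | Mul s u => eval o s * eval o u
  end.

Fixpoint occ (t : term) : nat :=
  match t with
  | Var => 1
  | Cst _ => 0
  | Mul s u => occ s + occ u
  end.

Definition justification := (term * term)%type.

Definition monolinear (j : justification) : Prop :=
  occ j.1 <= 1 /\ occ j.2 <= 1 /\ (0 < occ j.2 -> 0 < occ j.1).

Definition up (a b : nat) (j : justification) : Prop :=
  monolinear j /\ exists o, eval o j.1 = a /\ eval o j.2 = b.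

Definition up2 (a b c d : nat) (j : justification) : Prop :=
  up a b j /\ up c d j.

Definition trivial_just (j : justification) : Prop :=
  monolinear j /\ forall a' b' c' d', up2 a' b' c' d' j.

(* a -> b :·_m c -> d ; inclusions are taken ignoring trivial justifications *)
Definition arrow_m (a b c d : nat) : Prop :=
  (forall j, (up a b j \/ up c d j) -> trivial_just j)
  \/
  ((exists j, up2 a b c d j /\ ~ trivial_just j) /\
   forall d',
     (forall j, up2 a b c d j -> ~ trivial_just j -> up2 a b c d' j) ->
     (exists j, up2 a b c d' j /\ ~ trivial_just j) /\
     (forall j, up2 a b c d' j -> ~ trivial_just j -> up2 a b c d j)).

Definition analogy_m (a b c d : nat) : Prop :=
  arrow_m a b c d /\ arrow_m b a d c /\ arrow_m c d a b /\ arrow_m d c b a.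

From mathcomp Require Import all_boot.

Set Implicit Arguments.
Unset Strict Implicit.
Unset Printing Implicit Defensive.

(* A monolinear justification s -> t either has constant target, or both
   sides are linear in x, s = k x and t = l x, so that a : b and c : d are
   the proportions k o : l o and k o' : l o'.  Between primes this forces
   b = d, or a = b and c = d; and every arrow relation has such a common
   justification.  Conversely, (Cst a, Cst b) and (Var, Var) are non-trivial
   justifications that pin down the fourth term, which gives the two kinds of
   analogies in the statement. *)

Lemma eval_occ0 o t : occ t = 0 -> eval o t = eval 0 t.
Proof.
elim: t => //= s IHs u IHu /eqP.
by rewrite addn_eq0 => /andP[/eqP/IHs -> /eqP/IHu ->].
Qed.

Lemma eval_occ1 o t : occ t = 1 -> eval o t = eval 1 t * o.
Proof.
elim: t => //= [|s IHs u IHu]; first by rewrite mul1n.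
case Hs: (occ s) => [|[|?]]; case Hu: (occ u) => [|[|?]] //= _.
- by rewrite (eval_occ0 o Hs) (eval_occ0 1 Hs) (IHu Hu) mulnA.
- by rewrite (eval_occ0 o Hu) (eval_occ0 1 Hu) (IHs Hs) mulnAC.
Qed.

Lemma up2_const_or_proportional a b c d j : up2 a b c d j ->
  b = d \/ exists k l o o', [/\ a = k * o, b = l * o, c = k * o' & d = l * o'].
Proof.
case: j => s t [[[/= s_le1 [t_le1 t_s]] [o [<- <-]]] [_ [o' [<- <-]]]].
case t_occ: (occ t) t_le1 t_s => [|[|?]] // _ t_s.
  by left; rewrite (eval_occ0 o t_occ) (eval_occ0 o' t_occ).
have s_occ : occ s = 1 by case: (occ s) s_le1 t_s => [|[|?]] // _ /(_ isT).
right; exists (eval 1 s), (eval 1 t), o, o'.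
by rewrite (eval_occ1 o s_occ) (eval_occ1 o' s_occ) (eval_occ1 o t_occ)
  (eval_occ1 o' t_occ).
Qed.

Lemma prime_mul_unit x y : prime (x * y) -> x = 1 \/ y = 1.
Proof.
move=> pxy; have [-> | x_ne1] := eqVneq x 1; first by left.
have xE := prime_nt_dvdP pxy x_ne1 (dvdn_mulr y (dvdnn x)).
have x_gt0 : 0 < x by move: (prime_gt0 pxy); rewrite muln_gt0 => /andP[].
by right; apply/eqP; rewrite -(eqn_pmul2l x_gt0) muln1 -xE.
Qed.

Lemma prime_proportion k l o o' :
  prime (k * o) -> prime (l * o) -> prime (k * o') ->
  l * o = l * o' \/ (k * o = l * o /\ k * o' = l * o').
Proof.
move=> pko plo pko'.
case: (prime_mul_unit pko) => [k1 | o1]; subst.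
- case: (prime_mul_unit plo) => [l1 | o1]; first by right; rewrite l1.
  by move: pko; rewrite o1.
- case: (prime_mul_unit pko') => [k1 | o'1]; last by left; rewrite o'1.
  by move: pko; rewrite k1.
Qed.

Lemma arrow_m_up2 a b c d : arrow_m a b c d -> exists j, up2 a b c d j.
Proof.
case=> [triv | [[j [Hj _]] _]]; last by exists j.
have cst_ab : up a b (Cst a, Cst b) by split=> //; exists 0.
by exists (Cst a, Cst b); case: (triv _ (or_introl cst_ab)) => _; apply.
Qed.

Lemma arrow_m_prime a b c d : prime a -> prime b -> prime c ->
  arrow_m a b c d -> b = d \/ (a = b /\ c = d).
Proof.
move=> pa pb pc /arrow_m_up2[j /up2_const_or_proportional[-> | ]]; first by left.
by case=> k [l [o [o' [Ea Eb Ec Ed]]]]; subst; apply: prime_proportion.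
Qed.

Lemma arrow_m_determined a b c d j :
  up2 a b c d j -> ~ trivial_just j ->
  (forall d', up2 a b c d' j -> d' = d) -> arrow_m a b c d.
Proof.
move=> Jj ntj det; right; split; first by exists j.
move=> d' incl; have Jj' := incl j Jj ntj.
by rewrite (det d' Jj'); split=> //; exists j.
Qed.

Lemma arrow_m_refl a b : arrow_m a b a b.
Proof.
have cst_ab : up a b (Cst a, Cst b) by split=> //; exists 0.
apply: (@arrow_m_determined _ _ _ _ (Cst a, Cst b)) => //.
- by case=> _ /(_ a.+1 b a b) [[_ [? [/= /n_Sn]]]].
- by move=> d' [_ [_ [? [_ <-]]]].
Qed.

Lemma arrow_m_diag a c : arrow_m a a c c.
Proof.
have var n : up n n (Var, Var) by split=> //; exists n.
apply: (@arrow_m_determined _ _ _ _ (Var, Var)) => //.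
- by case=> _ /(_ 0 1 0 0) [[_ [? [/= ->]]]].
- by move=> d' [_ [_ [? [/= -> ->]]]].
Qed.

Theorem mainTheorem10 (p q p' q' : nat) :
  prime p -> prime q -> prime p' -> prime q' ->
  (analogy_m p q p' q' <-> (p = q /\ p' = q') \/ (p = p' /\ q = q')).
Proof.
move=> pp pq pp' pq'; split.
  case=> /(arrow_m_prime pp pq pp') [q_q' | ]; last by left.
  case=> /(arrow_m_prime pq pp pq') [p_p' | [<- <-]] _; last by left.
  by right.
by case=> [[<- <-] | [<- <-]]; do !split;
  first [exact: arrow_m_diag | exact: arrow_m_refl].
Qed.
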